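(* Let $H$ be a reduced atomic cancellative monoid, and let $\sim_H \subset \mathsf Z(H)\times\mathsf Z(H)$ be its monoid of relations. 1. $\sim_H$ is a saturated submonoid of $\mathsf Z(H)\times \mathsf Z(H)$, and $\sim_H$ is a reduced cancellative BF-monoid. 2. If $\sim_H$ satisfies the ascending chain condition on right ideals, then $\sim_H$ is finitely generated. 3. If $H$ is commutative and finitely generated, then $\sim_H$ satisfies the ascending chain condition on ideals and $\sim_H$ is finitely generated.
   Context: A monoid is an associative semigroup with identity; $H^\times$ is its group of units and $H$ is reduced if $H^\times=\{1\}$. An atom of $H$ is a non-unit $u$ such that $u=ab$ implies $a\in H^\times$ or $b\in H^\times$; $\mathcal A(H)$ is the set of atoms, and $H$ is atomic if every non-unit is a finite product of atoms. For a reduced atomic monoid $H$, the factorization monoid $\mathsf Z(H)$ is the free monoid $\mathcal F^*(\mathcal A(H))$ (words over $\mathcal A(H)$) if $H$ is non-commutative and the free abelian monoid $\mathcal F(\mathcal A(H))$ if $H$ is commutative; $\pi:\mathsf Z(H)\to H$ is the canonical epimorphism, and the length $|z|$ of $z\in\mathsf Z(H)$ is the number of atoms in $z$. The monoid of relations is $\sim_H=\{(x,y)\in\mathsf Z(H)\times\mathsf Z(H)\mid \pi(x)=\pi(y)\}$. A submonoid $S$ of a monoid $D$ is saturated if $a\in D$, $b\in S$ and ($ab\in S$ or $ba\in S$) imply $a\in S$. For an atomic monoid, $\mathsf L(a)$ denotes the set of all $k$ such that $a$ is a product of $k$ atoms (with $\mathsf L(\varepsilon)=\{0\}$ for units); a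 BF-monoid is an atomic monoid in which $\mathsf L(a)$ is finite and nonempty for all $a$. *)

From Stdlib Require Import List Permutation Arith RelationClasses.
Import ListNotations.
Set Implicit Arguments.
Unset Strict Implicit.

Record monoid := Monoid {
  mcar :> Type;
  mmul : mcar -> mcar -> mcar;
  mone : mcar;
  massoc : forall x y z, mmul x (mmul y z) = mmul (mmul x y) z;
  mmul1l : forall x, mmul mone x = x;
  mmul1r : forall x, mmul x mone = x }.

(** A monoid presented on a setoid (needed for the free abelian monoid
    F(A(H)), represented as lists of atoms modulo permutation). *)
Record smonoid := SMonoid {
  scar :> Type;
  seqv : scar -> scar -> Prop;
  smul : scar -> scar -> scar;
  sone : scar;
  seqv_equiv : Equivalence seqv;
  smul_proper : forall x x' y y', seqv x x' -> seqv y y' ->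
                  seqv (smul x y) (smul x' y');
  sassoc : forall x y z, seqv (smul x (smul y z)) (smul (smul x y) z);
  smul1l : forall x, seqv (smul sone x) x;
  smul1r : forall x, seqv (smul x sone) x }.

Arguments seqv {s} _ _.
Arguments smul {s} _ _.
Arguments sone {s}.

Definition smon_of (H : monoid) : smonoid.
Proof.
  refine (@SMonoid (mcar H) eq (@mmul H) (@mone H) eq_equivalence _
            (@massoc H) (@mmul1l H) (@mmul1r H)).
  intros; subst; reflexivity.
Defined.

Section Notions.
Variable D : smonoid.

Definition sprod (l : list D) : D := fold_right smul sone l.

Definition is_unit (u : D) : Prop :=
  exists v : D, seqv (smul u v) sone /\ seqv (smul v u) sone.

Definition reduced : Prop := forall u : D, is_unit u -> seqv u sone.

Definition is_atom (a : D) : Prop :=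
  ~ is_unit a /\ forall b c : D, seqv a (smul b c) -> is_unit b \/ is_unit c.

Definition atomic : Prop :=
  forall a : D, ~ is_unit a ->
    exists l : list D, Forall is_atom l /\ seqv a (sprod l).

Definition cancellative : Prop :=
  (forall a b c : D, seqv (smul a b) (smul a c) -> seqv b c) /\
  (forall a b c : D, seqv (smul b a) (smul c a) -> seqv b c).

Definition commutative : Prop := forall a b : D, seqv (smul a b) (smul b a).

Definition lengths (a : D) (k : nat) : Prop :=
  (is_unit a /\ k = 0) \/
  (~ is_unit a /\ exists l : list D,
       Forall is_atom l /\ length l = k /\ seqv a (sprod l)).

Definition BF : Prop :=
  atomic /\ forall a : D, (exists k, lengths a k) /\
                          (exists N, forall k, lengths a k -> k <= N).

Definition fin_gen : Prop :=
  exists g : list D, forall a : D,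
    exists l : list D, Forall (fun x => In x g) l /\ seqv a (sprod l).

Definition right_ideal (I : D -> Prop) : Prop :=
  (forall x y : D, seqv x y -> I x -> I y) /\
  (forall x h : D, I x -> I (smul x h)).

Definition ideal (I : D -> Prop) : Prop :=
  right_ideal I /\ (forall x h : D, I x -> I (smul h x)).

Definition ACC (P : (D -> Prop) -> Prop) : Prop :=
  forall I : nat -> D -> Prop,
    (forall n, P (I n)) ->
    (forall n x, I n x -> I (S n) x) ->
    exists N, forall n x, N <= n -> I n x -> I N x.

Definition submonoid (P : D -> Prop) : Prop :=
  (forall x y : D, seqv x y -> P x -> P y) /\ P sone /\
  (forall x y : D, P x -> P y -> P (smul x y)).

Definition saturated (P : D -> Prop) : Prop :=
  forall a b : D, P b -> (P (smul a b) \/ P (smul b a)) -> P a.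

End Notions.

Definition prod_smon (D1 D2 : smonoid) : smonoid.
Proof.
  refine (@SMonoid (D1 * D2)%type
     (fun p q => seqv (fst p) (fst q) /\ seqv (snd p) (snd q))
     (fun p q => (smul (fst p) (fst q), smul (snd p) (snd q)))
     (sone, sone) _ _ _ _ _).
  - pose proof (seqv_equiv D1) as E1; pose proof (seqv_equiv D2) as E2.
    split.
    + intros [a b]; split; reflexivity.
    + intros [a b] [c d] [h1 h2]; split; symmetry; assumption.
    + intros [a b] [c d] [e f] [h1 h2] [h3 h4]; split; etransitivity; eauto.
  - intros [a b] [c d] [e f] [g h] [h1 h2] [h3 h4]; split; simpl in *;
      apply smul_proper; assumption.
  - intros; split; apply sassoc.
  - intros; split; apply smul1l.
  - intros; split; apply smul1r.
Defined.

Definition sub_smon (D : smonoid) (P : D -> Prop) (P1 : P sone)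
  (Pm : forall x y, P x -> P y -> P (smul x y)) : smonoid.
Proof.
  refine (@SMonoid {x : D | P x}
     (fun x y => seqv (proj1_sig x) (proj1_sig y))
     (fun x y => exist _ (smul (proj1_sig x) (proj1_sig y))
                         (Pm _ _ (proj2_sig x) (proj2_sig y)))
     (exist _ sone P1) _ _ _ _ _).
  - pose proof (seqv_equiv D) as E.
    split.
    + intros x; reflexivity.
    + intros x y h; symmetry; exact h.
    + intros x y z h1 h2; etransitivity; eauto.
  - intros; simpl; apply smul_proper; assumption.
  - intros; apply sassoc.
  - intros; apply smul1l.
  - intros; apply smul1r.
Defined.

Definition atomT (H : monoid) := {a : H | @is_atom (smon_of H) a}.

(** Z(H) = F*(A(H)) (words) if H is non-commutative, and F(A(H))
    (words modulo permutation) if H is commutative. *)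
Definition Zeqv (H : monoid) (z1 z2 : list (atomT H)) : Prop :=
  z1 = z2 \/ (commutative (smon_of H) /\ Permutation z1 z2).

Definition Zmon (H : monoid) : smonoid.
Proof.
  refine (@SMonoid (list (atomT H)) (@Zeqv H) (@app _) nil _ _ _ _ _).
  - split.
    + intros x; left; reflexivity.
    + intros x y [h|[c h]]; [left; symmetry; exact h|right; split;
        [exact c| apply Permutation_sym; exact h]].
    + intros x y z [h1|[c1 h1]] [h2|[c2 h2]].
      * left; congruence.
      * subst; right; auto.
      * subst; right; auto.
      * right; split; [exact c1|]; eapply perm_trans; eauto.
  - intros x x' y y' [h1|[c1 h1]] [h2|[c2 h2]].
    + left; congruence.
    + subst; right; split; [exact c2|]; apply Permutation_app_head; exact h2.
    + subst; right; split; [exact c1|]; apply Permutation_app_tail; exact h1.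
    + right; split; [exact c1|]; apply Permutation_app; assumption.
  - intros; left; apply app_assoc.
  - intros; left; reflexivity.
  - intros; left; apply app_nil_r.
Defined.

Definition pi (H : monoid) (z : list (atomT H)) : H :=
  fold_right (fun a x => @mmul H (proj1_sig a) x) (@mone H) z.

Lemma pi_app (H : monoid) (z1 z2 : list (atomT H)) :
  pi (z1 ++ z2) = @mmul H (pi z1) (pi z2).
Proof.
  induction z1 as [|a z1 IH]; simpl.
  - symmetry; apply mmul1l.
  - rewrite IH; apply massoc.
Qed.

Definition ZZ (H : monoid) : smonoid := prod_smon (Zmon H) (Zmon H).

Definition relP (H : monoid) (p : ZZ H) : Prop := pi (fst p) = pi (snd p).

Lemma relP_one (H : monoid) : relP (H := H) sone.
Proof. reflexivity. Qed.

Lemma relP_mul (H : monoid) (p q : ZZ H) :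
  relP p -> relP q -> relP (smul p q).
Proof.
  unfold relP; destruct p as [a b], q as [c d]; simpl; intros h1 h2.
  rewrite !pi_app, h1, h2; reflexivity.
Qed.

Definition RelMon (H : monoid) : smonoid :=
  @sub_smon (ZZ H) (@relP H) (relP_one H) (@relP_mul H).

(** Part 1 is bookkeeping: a pair of factorizations is a relation iff both
    sides have the same image, so cancellativity of [H] makes [~_H] saturated,
    and the total length [|x| + |y|] is an additive size function with trivial
    kernel, which makes [~_H] reduced and BF.

    Part 2: if [~_H] were not finitely generated, one could pick atoms
    [u_0, u_1, ...] of [~_H], each not associated to any earlier one; the right
    ideals generated by [u_0, ..., u_n] would then form a strictly ascending
    chain, since an atom lying in [u_i ~_H] is associated to [u_i].

    Part 3: when [H] is commutative and finitely generated it has finitely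
    many atoms, so [Z(H) x Z(H)] is a free commutative monoid of finite rank,
    and by Dickson's lemma every sequence in [~_H] has terms [p_i], [p_j] with
    [i < j] and [p_i] dividing [p_j] in [Z(H) x Z(H)].  By saturation the
    cofactor lies in [~_H], so [~_H] has no infinite strictly ascending chain
    of (right) ideals, and part 2 applies. *)

From Stdlib Require Import List Permutation Arith Lia Setoid Morphisms Wf_nat.
From Stdlib Require Import Classical ClassicalEpsilon ProofIrrelevance.
Import ListNotations.

#[global] Instance seqv_Equivalence (D : smonoid) : Equivalence (@seqv D) :=
  seqv_equiv D.

#[global] Instance smul_Proper (D : smonoid) :
  Proper (seqv ==> seqv ==> seqv) (@smul D).
Proof. intros x x' Ex y y' Ey; apply smul_proper; assumption. Qed.

Lemma le_chain (F : nat -> nat) :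
  (forall n, F n <= F (S n)) -> forall i j, i <= j -> F i <= F j.
Proof. intros HF i j Hij; induction Hij; [reflexivity|etransitivity; eauto]. Qed.

Lemma exists_argmin_after (f : nat -> nat) (p : nat) :
  exists m, p < m /\ forall m', p < m' -> f m <= f m'.
Proof.
  destruct (dec_inh_nat_subset_has_unique_least_element
              (fun v => exists m, p < m /\ f m = v)) as (v & [[m [Hm <-]] Hmin] & _).
  - intro v; apply classic.
  - exists (f (S p)), (S p); auto.
  - exists m; split; [exact Hm|]. intros m' Hm'; apply Hmin; eauto.
Qed.

Lemma nondecreasing_subsequence (f : nat -> nat) :
  exists phi : nat -> nat,
    (forall n, phi n < phi (S n)) /\ (forall n, f (phi n) <= f (phi (S n))).
Proof.
  destruct (choice _ (exists_argmin_after f)) as [next Hnext].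
  exists (fun n => Nat.iter (S n) next 0); split; intro n; simpl.
  - apply Hnext.
  - apply Hnext; pose proof (proj1 (Hnext (Nat.iter n next 0))).
    pose proof (proj1 (Hnext (next (Nat.iter n next 0)))); lia.
Qed.

Lemma dickson_subsequence {A : Type} (g : list A) (f : nat -> A -> nat) :
  exists phi : nat -> nat, (forall n, phi n < phi (S n)) /\
    (forall n a, In a g -> f (phi n) a <= f (phi (S n)) a).
Proof.
  induction g as [|a g (phi & Hphi & Hg)].
  - exists (fun n => n); split; [auto|intros n a []].
  - destruct (nondecreasing_subsequence (fun n => f (phi n) a)) as (psi & Hpsi & Ha).
    exists (fun n => phi (psi n)); split.
    + intro n; apply (Nat.lt_le_trans _ (phi (S (psi n)))); [apply Hphi|].
      apply le_chain; [intro k; apply Nat.lt_le_incl, Hphi|apply Hpsi].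
    + intros n b [<-|Hb]; [apply Ha|].
      apply (le_chain (fun k => f (phi k) b)); [intro k; apply Hg, Hb|].
      apply Nat.lt_le_incl, Hpsi.
Qed.

Lemma dickson {A : Type} (g : list A) (f : nat -> A -> nat) :
  exists i j, i < j /\ forall a, In a g -> f i a <= f j a.
Proof.
  destruct (dickson_subsequence g f) as (phi & Hphi & Hg).
  exists (phi 0), (phi 1); auto.
Qed.

Lemma Permutation_app_of_count_occ_le {A : Type}
  (dec : forall a b : A, {a = b} + {a <> b}) (x y : list A) :
  (forall a, count_occ dec x a <= count_occ dec y a) ->
  exists d, Permutation y (x ++ d).
Proof.
  revert y; induction x as [|a x IH]; intros y Hle.
  - exists y; reflexivity.
  - assert (Hy : In a y).
    { apply (count_occ_In dec). specialize (Hle a).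
      rewrite count_occ_cons_eq in Hle; [lia|reflexivity]. }
    destruct (in_split _ _ Hy) as (y1 & y2 & ->).
    destruct (IH (y1 ++ y2)) as [d Hd].
    { intro b; specialize (Hle b); destruct (dec a b) as [<-|Hab].
      - rewrite count_occ_cons_eq, count_occ_elt_eq in Hle; auto; lia.
      - rewrite count_occ_cons_neq, count_occ_elt_neq in Hle; auto. }
    exists d; rewrite <- Permutation_middle; simpl; auto.
Qed.

Lemma Permutation_pair_dickson {A : Type}
  (dec : forall a b : A, {a = b} + {a <> b}) (alphabet : list A)
  (Halphabet : forall a, In a alphabet) (s : nat -> list A * list A) :
  exists i j, i < j /\ exists d1 d2,
    Permutation (fst (s j)) (fst (s i) ++ d1) /\
    Permutation (snd (s j)) (snd (s i) ++ d2).
Proof.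
  destruct (dickson (list_prod [true; false] alphabet)
     (fun k c => count_occ dec ((if fst c then fst else snd) (s k)) (snd c)))
    as (i & j & Hij & Hle).
  exists i, j; split; [exact Hij|].
  destruct (Permutation_app_of_count_occ_le dec (fst (s i)) (fst (s j))) as [d1 P1].
  { intro a; apply (Hle (true, a)), in_prod; simpl; auto. }
  destruct (Permutation_app_of_count_occ_le dec (snd (s i)) (snd (s j))) as [d2 P2].
  { intro a; apply (Hle (false, a)), in_prod; simpl; auto. }
  exists d1, d2; auto.
Qed.

Definition right_divisibility_wqo (D : smonoid) : Prop :=
  forall s : nat -> D, exists i j, i < j /\ exists d, seqv (smul (s i) d) (s j).

Section SetoidMonoid.
Context {D : smonoid}.

Lemma sprod_app (l1 l2 : list D) :
  seqv (sprod (l1 ++ l2)) (smul (sprod l1) (sprod l2)).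
Proof.
  induction l1 as [|a l1 IH]; simpl.
  - symmetry; apply smul1l.
  - rewrite IH; apply sassoc.
Qed.

Lemma is_unit_seqv_one (x : D) : seqv x sone -> is_unit x.
Proof. intro E; exists sone; rewrite E; split; apply smul1l. Qed.

Section SizeFunction.
Variable size : D -> nat.
Hypothesis size_seqv : forall x y : D, seqv x y -> size x = size y.
Hypothesis size_mul : forall x y : D, size (smul x y) = size x + size y.
Hypothesis size_eq0 : forall x : D, size x = 0 -> seqv x sone.

Lemma reduced_of_size : reduced D.
Proof.
  intros u [v [E _]]; apply size_eq0.
  assert (Hone : size sone = 0).
  { pose proof (size_seqv _ _ (smul1l (sone (s := D)))) as E1; rewrite size_mul in E1; lia. }
  pose proof (size_seqv _ _ E) as E1; rewrite size_mul in E1; lia.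
Qed.

Lemma size_pos (x : D) : ~ is_unit x -> 0 < size x.
Proof.
  intro Hx; destruct (size x) eqn:E; [|lia].
  exfalso; apply Hx, is_unit_seqv_one, size_eq0, E.
Qed.

Lemma atomic_of_size : atomic D.
Proof.
  intro a; remember (size a) as n eqn:En; revert a En.
  induction n as [n IH] using lt_wf_ind; intros a -> Ha.
  destruct (classic (is_atom a)) as [Hat|Hnat].
  - exists [a]; split; [constructor; [exact Hat|constructor]|symmetry; apply smul1r].
  - assert (exists b c, seqv a (smul b c) /\ ~ is_unit b /\ ~ is_unit c)
      as (b & c & E & Hb & Hc).
    { apply NNPP; intro Hno; apply Hnat; split; [exact Ha|intros b c E].
      apply NNPP; intro Hbc; apply Hno; exists b, c; tauto. }
    assert (Hsize : size a = size b + size c) by (rewrite <- size_mul; auto).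
    pose proof (size_pos _ Hb); pose proof (size_pos _ Hc).
    destruct (IH (size b) ltac:(lia) b eq_refl Hb) as (lb & Hlb & Eb).
    destruct (IH (size c) ltac:(lia) c eq_refl Hc) as (lc & Hlc & Ec).
    exists (lb ++ lc); split; [apply Forall_app; auto|].
    rewrite sprod_app, E, Eb, Ec; reflexivity.
Qed.

Lemma length_le_size (l : list D) :
  Forall (@is_atom D) l -> length l <= size (sprod l).
Proof.
  induction 1 as [|a l Ha _ IH]; simpl; [lia|].
  rewrite size_mul; pose proof (size_pos _ (proj1 Ha)); lia.
Qed.

Lemma BF_of_size : BF D.
Proof.
  split; [exact atomic_of_size|intro a; split].
  - destruct (classic (is_unit a)) as [Hu|Hu]; [exists 0; left; auto|].
    destruct (atomic_of_size _ Hu) as (l & Hl & E).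
    exists (length l); right; eauto.
  - exists (size a); intros k [[_ ->]|[_ (l & Hl & <- & E)]]; [lia|].
    rewrite (size_seqv _ _ E); apply length_le_size, Hl.
Qed.

End SizeFunction.

Lemma fin_gen_of_atoms (g : list D) : reduced D -> atomic D ->
  (forall a, is_atom a -> exists x, In x g /\ seqv a x) -> fin_gen D.
Proof.
  intros Hred Hat Hg; exists g.
  assert (Hlift : forall l, Forall (@is_atom D) l ->
            exists l', Forall (fun x => In x g) l' /\ seqv (sprod l) (sprod l')).
  { induction 1 as [|a l Ha _ (l' & Hl' & E')].
    - exists []; split; [constructor|reflexivity].
    - destruct (Hg a Ha) as (x & Hx & Ex).
      exists (x :: l'); split; [constructor; auto|simpl; rewrite E', Ex; reflexivity]. }
  intro a; destruct (classic (is_unit a)) as [Hu|Hu].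
  - exists []; split; [constructor|apply Hred, Hu].
  - destruct (Hat a Hu) as (l & Hl & E); destruct (Hlift l Hl) as (l' & Hl' & E').
    exists l'; split; [exact Hl'|rewrite E; exact E'].
Qed.

Lemma fresh_sequence {A : Type} (P : list A -> A -> Prop) :
  (forall l, exists a, P l a) ->
  exists u : nat -> A, forall n, exists l, P l (u n) /\ forall i, i < n -> In (u i) l.
Proof.
  intro HP; destruct (choice _ HP) as [F HF].
  pose (prefix n := Nat.iter n (fun l => F l :: l) []).
  exists (fun n => F (prefix n)); intro n; exists (prefix n); split; [apply HF|].
  induction n as [|n IH]; intros i Hi; [lia|].
  destruct (Nat.eq_dec i n) as [->|Hin]; [left; reflexivity|right; apply IH; lia].
Qed.

Lemma fin_gen_of_ACC_right_ideal :
  reduced D -> atomic D -> ACC (@right_ideal D) -> fin_gen D.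
Proof.
  intros Hred Hat Hacc; apply NNPP; intro Hnfg.
  assert (Hfresh : forall g : list D, exists a : D, is_atom a /\ forall x, In x g -> ~ seqv a x).
  { intro g; apply NNPP; intro Hno; apply Hnfg, (fin_gen_of_atoms g Hred Hat).
    intros a Ha; apply NNPP; intro Hna; apply Hno; exists a; split; [exact Ha|].
    intros x Hx E; apply Hna; eauto. }
  destruct (fresh_sequence _ Hfresh) as [u Hu].
  pose (I n x := exists i, i <= n /\ exists h, seqv x (smul (u i) h)).
  destruct (Hacc I) as [N HN].
  - intro n; split.
    + intros x y E (i & Hi & h & Eh); exists i; split; [exact Hi|exists h].
      rewrite <- E; exact Eh.
    + intros x h' (i & Hi & h & Eh); exists i; split; [exact Hi|exists (smul h h')].
      rewrite Eh; symmetry; apply sassoc.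
  - intros n x (i & Hi & Ex); exists i; split; [lia|exact Ex].
  - destruct (HN (S N) (u (S N)) ltac:(lia)) as (i & Hi & h & Eh).
    { exists (S N); split; [reflexivity|exists sone; symmetry; apply smul1r]. }
    destruct (Hu (S N)) as (l & [[_ Hatom] Hnew] & Hearlier).
    destruct (Hatom _ _ Eh) as [Hunit|Hunit].
    + destruct (Hu i) as (? & [[Hnu _] _] & _); exact (Hnu Hunit).
    + apply (Hnew (u i)); [apply Hearlier; lia|].
      rewrite Eh, (Hred _ Hunit); apply smul1r.
Qed.

Lemma ACC_right_ideal_of_wqo : right_divisibility_wqo D -> ACC (@right_ideal D).
Proof.
  intros Hwqo I HI Hasc; apply NNPP; intro Hnst.
  assert (Hmono : forall m n x, m <= n -> I m x -> I n x)
    by (intros m n x Hmn; induction Hmn; auto).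
  assert (Hescape : forall N, exists p : nat * D,
             N <= fst p /\ I (fst p) (snd p) /\ ~ I N (snd p)).
  { intro N; apply NNPP; intro Hno; apply Hnst; exists N; intros n x Hn Hx.
    apply NNPP; intro Hnx; apply Hno; exists (n, x); auto. }
  destruct (choice _ Hescape) as [escape Hesc].
  (* The k-th term lies in I (N (S k)) but not in I (N k); a divisible pair
     i < j puts the j-th term into I (N (S i)), which is contained in I (N j). *)
  pose (N k := Nat.iter k (fun m => fst (escape m)) 0).
  assert (HN : forall i j, i <= j -> N i <= N j)
    by (apply le_chain; intro k; apply Hesc).
  destruct (Hwqo (fun k => snd (escape (N k)))) as (i & j & Hij & d & Ed).
  apply (proj2 (proj2 (Hesc (N j)))), (proj1 (HI _) _ _ Ed), (proj2 (HI _)).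
  apply (Hmono (N (S i))); [apply HN; lia|apply Hesc].
Qed.

End SetoidMonoid.

Lemma cancellative_prod (D1 D2 : smonoid) :
  cancellative D1 -> cancellative D2 -> cancellative (prod_smon D1 D2).
Proof.
  intros [l1 r1] [l2 r2]; split;
    intros [a1 a2] [b1 b2] [c1 c2] [E1 E2]; simpl in *; split; eauto.
Qed.

Lemma cancellative_sub (D : smonoid) (P : D -> Prop) (P1 : P sone)
  (Pm : forall x y, P x -> P y -> P (smul x y)) :
  cancellative D -> cancellative (sub_smon P1 Pm).
Proof.
  intros [l r]; split; intros [a ?] [b ?] [c ?]; simpl; [apply l|apply r].
Qed.

Lemma atom_product_in_generators {H : monoid} (g l : list H) :
  reduced (smon_of H) -> Forall (fun x => In x g) l ->
  @is_atom (smon_of H) (@sprod (smon_of H) l) -> In (@sprod (smon_of H) l) g.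
Proof.
  intro Hred; induction 1 as [|x l Hx _ IH]; simpl; intros [Hu Ha].
  - exfalso; apply Hu; exists (mone H); split; apply mmul1l.
  - destruct (Ha x (@sprod (smon_of H) l) eq_refl) as [Hxu|Hlu].
    + apply Hred in Hxu; simpl in Hxu; subst x.
      rewrite mmul1l in *; apply IH; split; assumption.
    + apply Hred in Hlu; simpl in Hlu; rewrite Hlu, mmul1r; exact Hx.
Qed.

Lemma atomT_list_complete {H : monoid} (g : list H) :
  exists atoms : list (atomT H),
    forall a : atomT H, In (proj1_sig a) g -> In a atoms.
Proof.
  induction g as [|h g (atoms & Hatoms)]; [exists []; intros a []|].
  destruct (classic (@is_atom (smon_of H) h)) as [Hh|Hh].
  - exists (exist _ h Hh :: atoms); intros [a Ha] [E|Hin].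
    + left; simpl in E; subst a; f_equal; apply proof_irrelevance.
    + right; apply Hatoms, Hin.
  - exists atoms; intros a [E|Hin]; [|apply Hatoms, Hin].
    exfalso; apply Hh; rewrite E; apply proj2_sig.
Qed.

Lemma finite_atoms {H : monoid} : reduced (smon_of H) -> fin_gen (smon_of H) ->
  exists atoms : list (atomT H), forall a : atomT H, In a atoms.
Proof.
  intros Hred [g Hg]; destruct (atomT_list_complete g) as [atoms Hatoms].
  exists atoms; intros [a Ha]; apply Hatoms; simpl.
  destruct (Hg a) as (l & Hl & ->); apply atom_product_in_generators; assumption.
Qed.

Section Relations.
Variable H : monoid.

Lemma pi_Permutation {x y : list (atomT H)} :
  commutative (smon_of H) -> Permutation x y -> pi x = pi y.
Proof.
  intros Hc; induction 1; simpl; congruence || (rewrite !massoc; f_equal; apply Hc).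
Qed.

Lemma pi_Zeqv {x y : list (atomT H)} : Zeqv x y -> pi x = pi y.
Proof. intros [->|[Hc P]]; [reflexivity|apply pi_Permutation; assumption]. Qed.

Lemma Zeqv_length {x y : list (atomT H)} : Zeqv x y -> length x = length y.
Proof. intros [->|[_ P]]; [reflexivity|apply Permutation_length, P]. Qed.

Lemma Zmon_cancellative : cancellative (Zmon H).
Proof.
  split; intros a b c [E|[Hc E]].
  - left; exact (app_inv_head _ _ _ E).
  - right; split; [exact Hc|exact (Permutation_app_inv_l _ _ _ E)].
  - left; exact (app_inv_tail _ _ _ E).
  - right; split; [exact Hc|exact (Permutation_app_inv_r _ _ _ E)].
Qed.

Lemma RelMon_cancellative : cancellative (RelMon H).
Proof.
  apply cancellative_sub, cancellative_prod; apply Zmon_cancellative.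
Qed.

Lemma relP_submonoid : submonoid (@relP H).
Proof.
  split; [|split; [apply relP_one|apply relP_mul]].
  intros [x1 x2] [y1 y2] [E1 E2]; unfold relP; simpl in *.
  rewrite (pi_Zeqv E1), (pi_Zeqv E2); auto.
Qed.

Lemma relP_saturated : cancellative (smon_of H) -> saturated (@relP H).
Proof.
  intros [Hl Hr] [a1 a2] [b1 b2]; unfold relP; simpl; rewrite !pi_app.
  intros Eb [E|E]; rewrite Eb in E; [exact (Hr _ _ _ E)|exact (Hl _ _ _ E)].
Qed.

Definition relation_length (p : RelMon H) : nat :=
  length (fst (proj1_sig p)) + length (snd (proj1_sig p)).

Lemma relation_length_seqv (p q : RelMon H) :
  seqv p q -> relation_length p = relation_length q.
Proof.
  destruct p as [[x1 x2] ?], q as [[y1 y2] ?]; intros [E1 E2].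
  unfold relation_length; simpl in *; rewrite (Zeqv_length E1), (Zeqv_length E2).
  reflexivity.
Qed.

Lemma relation_length_mul (p q : RelMon H) :
  relation_length (smul p q) = relation_length p + relation_length q.
Proof.
  destruct p as [[x1 x2] ?], q as [[y1 y2] ?]; unfold relation_length; simpl.
  rewrite !length_app; lia.
Qed.

Lemma relation_length_eq0 (p : RelMon H) : relation_length p = 0 -> seqv p sone.
Proof.
  destruct p as [[[|] [|]] ?]; unfold relation_length; simpl; try lia.
  split; left; reflexivity.
Qed.

Lemma RelMon_reduced : reduced (RelMon H).
Proof.
  apply (reduced_of_size relation_length);
    [exact relation_length_seqv|exact relation_length_mul|exact relation_length_eq0].
Qed.

Lemma RelMon_BF : BF (RelMon H).
Proof.
  apply (BF_of_size relation_length);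
    [exact relation_length_seqv|exact relation_length_mul|exact relation_length_eq0].
Qed.

Lemma RelMon_right_divisibility_wqo :
  reduced (smon_of H) -> cancellative (smon_of H) -> commutative (smon_of H) ->
  fin_gen (smon_of H) -> right_divisibility_wqo (RelMon H).
Proof.
  intros Hred Hcanc Hc Hfg s.
  destruct (finite_atoms Hred Hfg) as [atoms Hatoms].
  destruct (Permutation_pair_dickson (fun a b => excluded_middle_informative (a = b))
              atoms Hatoms (fun k => proj1_sig (s k)))
    as (i & j & Hij & d1 & d2 & P1 & P2).
  exists i, j; split; [exact Hij|].
  destruct (s i) as [[a1 a2] pa], (s j) as [[b1 b2] pb]; simpl in *.
  assert (Hd : relP (H := H) (d1, d2)).
  { apply (relP_saturated Hcanc (d1, d2) (a1, a2)); [exact pa|right].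
    unfold relP in *; simpl in *.
    rewrite <- (pi_Permutation Hc P1), <- (pi_Permutation Hc P2); exact pb. }
  exists (exist _ (d1, d2) Hd); split; right; split; auto; symmetry; assumption.
Qed.

End Relations.

Theorem lemma3p3 (H : monoid)
  (Hred : reduced (smon_of H)) (Hat : atomic (smon_of H))
  (Hcanc : cancellative (smon_of H)) :
  (submonoid (@relP H) /\ saturated (@relP H) /\
   reduced (RelMon H) /\ cancellative (RelMon H) /\ BF (RelMon H))
  /\ (ACC (@right_ideal (RelMon H)) -> fin_gen (RelMon H))
  /\ (commutative (smon_of H) -> fin_gen (smon_of H) ->
        ACC (@ideal (RelMon H)) /\ fin_gen (RelMon H)).
Proof.
  assert (Hfg_rel : ACC (@right_ideal (RelMon H)) -> fin_gen (RelMon H)).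
  { apply fin_gen_of_ACC_right_ideal; [apply RelMon_reduced|apply RelMon_BF]. }
  split; [|split; [exact Hfg_rel|intros Hc Hfg]].
  - exact (conj (relP_submonoid H) (conj (relP_saturated H Hcanc)
             (conj (RelMon_reduced H) (conj (RelMon_cancellative H) (RelMon_BF H))))).
  - assert (Hacc : ACC (@right_ideal (RelMon H))).
    { apply ACC_right_ideal_of_wqo, RelMon_right_divisibility_wqo; assumption. }
    split; [|exact (Hfg_rel Hacc)].
    intros I HI; apply Hacc; intro n; exact (proj1 (HI n)).
Qed.
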